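(* Let $(G,\sigma)$ be a connection graph and $i,j\in V$ with $i\neq j$. Write $j^c=V\setminus\{j\}$ and partition the connection Laplacian as $\mathcal{L}=\begin{bmatrix}\mathcal{L}_{j}&\mathcal{L}_{j,j^c}\\ \mathcal{L}_{j^c,j}&\mathcal{L}_{j^c}\end{bmatrix}$ (reordering nodes so that $j$ comes first). Then $$\Omega^0_{ij}=-\big((\mathcal{L}_{j^c})^{-1}\mathcal{L}_{j^c,j}\big)(i),$$ where $(\cdot)(i)$ denotes the $d\times d$ block corresponding to node $i$.
   Context: A connection graph $(G,\sigma)$: finite connected weighted graph $G=(V,E,W)$, $V=\{1,\dots,n\}$, with $w_{ij}>0$ iff $\{i,j\}\in E$, $\deg(i)=\sum_j w_{ij}$, and $\sigma$ mapping oriented edges to $\mathsf{O}(d)$ with $\sigma_{ji}=\sigma_{ij}^{\mathrm T}$. The connection Laplacian $\mathcal{L}$ is the $nd\times nd$ block matrix with $d\times d$ blocks $\deg(i)I_d$ on the diagonal, $-w_{ij}\sigma_{ij}$ for $i\sim j$, $0$ otherwise. Simple random walk $(X_t)$ with transition probabilities $w_{ij}/\deg(i)$; $T^0_j=\inf\{t\ge0:X_t=j\}$; $\Omega^0_{ij}=\mathbb{E}\big[\prod_{\ell=1}^{T^0_j}\sigma_{X_{\ell-1}X_\ell}\mid X_0=i\big]$ (ordered product). *)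

From HB Require Import structures.
From mathcomp Require Import all_boot all_order all_algebra.
From mathcomp Require Import all_classical all_reals all_analysis.
Set Implicit Arguments. Unset Strict Implicit. Unset Printing Implicit Defensive.
Import Order.TTheory GRing.Theory Num.Theory.
Local Open Scope ring_scope.

Section ConnectionGraph.
Variables (R : realType) (N d : nat).
Variables (w : 'I_N -> 'I_N -> R) (sigma : 'I_N -> 'I_N -> 'M[R]_d).

Definition cdeg (i : 'I_N) : R := \sum_(k < N) w i k.

Definition trans (i k : 'I_N) : R := w i k / cdeg i.

(* encoding / decoding of the (node, coordinate) index of an (N*d)-vector *)
Definition enc (p : 'I_N * 'I_d) : 'I_(N * d) := mxvec_index p.1 p.2.
Definition dec (k : 'I_(N * d)) : 'I_N * 'I_d :=
  enum_val (cast_ord (esym (mxvec_cast N d)) k).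

Definition lap_block (i k : 'I_N) : 'M[R]_d :=
  if i == k then (cdeg i)%:M
  else if 0 < w i k then - (w i k *: sigma i k) else 0.

Definition conn_lap : 'M[R]_(N * d) :=
  \matrix_(p, q) lap_block (dec p).1 (dec q).1 (dec p).2 (dec q).2.

(* E[ prod_{l=1}^{T} sigma_{X_{l-1} X_l} ; path = (x0, s) ] restricted to the
   path: (prod of transition probabilities) times ordered product of sigma *)
Fixpoint path_weight (x : 'I_N) (s : seq 'I_N) : 'M[R]_d :=
  match s with
  | [::] => 1%:M
  | y :: s' => trans x y *: (sigma x y *m path_weight y s')
  end.

(* contribution of the event {T^0_j = T} to Omega^0_{ij}: sum over walk
   paths x_0 = i, x_1, ..., x_T = j with x_t <> j for t < T
   (for T = 0 this gives 1 if i = j and 0 otherwise) *)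
Definition omega_term (i j : 'I_N) (T : nat) : 'M[R]_d :=
  if T is T'.+1 then
    \sum_(p : T'.-tuple 'I_N | (i != j) && all (fun x => x != j) p)
       path_weight i (rcons p j)
  else (i == j)%:R%:M.
End ConnectionGraph.

Section Reduced.
Variables (R : realType) (n d : nat).
(* vertices 'I_n.+1 ; j^c is parametrized by lift j : 'I_n -> 'I_n.+1 *)
Variables (L : 'M[R]_(n.+1 * d)) (j : 'I_n.+1).

Definition lap_jc : 'M[R]_(n * d) :=
  \matrix_(p, q) L (enc (lift j (dec p).1, (dec p).2))
                   (enc (lift j (dec q).1, (dec q).2)).
Definition lap_jc_j : 'M[R]_(n * d, d) :=
  \matrix_(p, b) L (enc (lift j (dec p).1, (dec p).2)) (enc (j, b)).

Definition block_at (X : 'M[R]_(n * d, d)) (i : 'I_n.+1) : 'M[R]_d :=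
  match unlift j i with
  | Some u => \matrix_(a, b) X (enc (u, a)) b
  | None => 0
  end.
End Reduced.

From HB Require Import structures.
From mathcomp Require Import all_boot all_order all_algebra.
From mathcomp Require Import all_classical all_reals all_analysis.
From mathcomp Require Import ring.
Import Order.TTheory GRing.Theory Num.Theory.
Import numFieldNormedType.Exports.
Local Open Scope classical_set_scope.
Local Open Scope ring_scope.

(* Everything is driven by the operator of the walk killed at j, acting on
   d x m block vectors by (P f)(x) = \sum_(y != j) p(x,y) sigma_xy f(y)
   (killed_step).  Off j the terms of the series satisfy
   omega_(T+2) = P omega_(T+1), and the partial sums S_K satisfy, blockwise
   on j^c, L_(j^c) S_(K+1) + L_(j^c,j) = - deg * omega_(K+1).  Because the
   sigma_xy are orthogonal, the squared Frobenius norm of (P^K f)(x) is at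
   most |f|^2 times the probability that the walk from x avoids j for K
   steps, which tends to 0 by the maximum principle on the connected graph.
   Hence omega_K -> 0, L_(j^c) is injective (its kernel consists of fixed
   points of P), and S_K -> - L_(j^c)^-1 L_(j^c,j). *)

Section SquaredFrobeniusNorm.
Context {R : realDomainType}.

Lemma sqr_wsum_le {I : finType} {P : pred I} (q c : I -> R) :
  (forall y, P y -> 0 <= q y) ->
  (\sum_(y | P y) q y * c y) ^+ 2 <=
    (\sum_(y | P y) q y) * \sum_(y | P y) q y * c y ^+ 2.
Proof.
move=> q_ge0; set S := \sum_(y | P y) q y; set A := \sum_(y | P y) q y * c y.
set B := \sum_(y | P y) q y * c y ^+ 2.
have S_ge0 : 0 <= S by apply: sumr_ge0.
have var_ge0 : 0 <= S * (S * B - A ^+ 2).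
  have -> : S * (S * B - A ^+ 2) = \sum_(y | P y) q y * (S * c y - A) ^+ 2.
    transitivity (\sum_(y | P y) (S ^+ 2 * (q y * c y ^+ 2) -
                    2 * S * A * (q y * c y) + A ^+ 2 * q y)).
      by rewrite !big_split /= sumrN -!mulr_sumr -/S -/A -/B; ring.
    by apply: eq_bigr => y _; ring.
  by apply: sumr_ge0 => y Py; rewrite mulr_ge0 ?q_ge0 ?sqr_ge0.
have [S_gt0|S_le0] := ltrP 0 S; first by rewrite -subr_ge0 -(pmulr_rge0 _ S_gt0).
have S0 : S = 0 by apply/le_anti; rewrite S_le0 S_ge0.
have -> : A = 0 by rewrite /A big1 // => y Py; rewrite (psumr_eq0P q_ge0 S0) ?mul0r.
by rewrite S0 expr0n mul0r.
Qed.

Context {d m : nat}.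
Implicit Types h : 'M[R]_(d, m).

Definition frob2 h : R := \tr (h^T *m h).

Lemma frob2E h : frob2 h = \sum_a \sum_b h a b ^+ 2.
Proof.
rewrite /frob2 /mxtrace exchange_big; apply: eq_bigr => b _.
by rewrite mxE; apply: eq_bigr => a _; rewrite !mxE expr2.
Qed.

Lemma frob2_ge0 h : 0 <= frob2 h.
Proof. by rewrite frob2E; do 2![apply: sumr_ge0 => ? _]; apply: sqr_ge0. Qed.

Lemma sqr_mxE_le_frob2 h a b : h a b ^+ 2 <= frob2 h.
Proof.
rewrite frob2E (bigD1 a) //= (bigD1 b) //= -addrA lerDl.
by apply: addr_ge0; do ?[apply: sumr_ge0 => ? _]; apply: sqr_ge0.
Qed.

Lemma frob2_orthomx (s : 'M[R]_d) h : s^T *m s = 1%:M -> frob2 (s *m h) = frob2 h.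
Proof. by move=> s_orth; rewrite /frob2 trmx_mul !mulmxA -(mulmxA h^T) s_orth mulmx1. Qed.

Lemma frob2_wsum_le {I : finType} {P : pred I} (q : I -> R) (u : I -> 'M[R]_(d, m)) :
  (forall y, P y -> 0 <= q y) ->
  frob2 (\sum_(y | P y) q y *: u y) <=
    (\sum_(y | P y) q y) * \sum_(y | P y) q y * frob2 (u y).
Proof.
move=> q_ge0; rewrite frob2E.
have entry a b : (\sum_(y | P y) q y *: u y) a b = \sum_(y | P y) q y * u y a b.
  by rewrite summxE; apply: eq_bigr => y _; rewrite mxE.
under eq_bigr => a _ do under eq_bigr => b _ do rewrite entry.
apply: le_trans (_ : _ <= \sum_a \sum_b
    (\sum_(y | P y) q y) * \sum_(y | P y) q y * u y a b ^+ 2) _.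
  by do 2![apply: ler_sum => ? _]; apply: sqr_wsum_le.
under eq_bigr do rewrite -mulr_sumr.
rewrite -mulr_sumr ler_wpM2l ?sumr_ge0 //.
rewrite [leLHS](_ : _ = \sum_(y | P y) q y * frob2 (u y)) //.
under eq_bigr do rewrite exchange_big /=.
rewrite exchange_big; apply: eq_bigr => y _.
by rewrite frob2E mulr_sumr; apply: eq_bigr => a _; rewrite mulr_sumr.
Qed.

End SquaredFrobeniusNorm.

Lemma cvg_mulmx_entry {R : numFieldType} {p q r : nat} (C : 'M[R]_(p, q))
    (A : nat -> 'M[R]_(q, r)) (l : 'M[R]_(q, r)) :
  (forall k c, (fun K => A K k c) @ \oo --> l k c) ->
  forall s c, (fun K => (C *m A K) s c) @ \oo --> (C *m l) s c.
Proof.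
move=> A_cvg s c; under eq_fun do rewrite mxE; rewrite mxE.
by apply: cvg_big => [|k _]; [exact: add_continuous | exact: cvgMl_tmp].
Qed.

Lemma cvg0_sqr_le {R : realFieldType} {u v : nat -> R} :
  (forall K, u K ^+ 2 <= v K) -> v @ \oo --> 0 -> u @ \oo --> 0.
Proof.
move=> uv /cvgr0Pnorm_lt v_cvg0; apply/cvgr0Pnorm_lt => e e_gt0.
apply: filterS (v_cvg0 _ (mulr_gt0 e_gt0 e_gt0)) => K vK.
have : `|u K| ^+ 2 < e ^+ 2.
  rewrite real_normK ?num_real // [e ^+ 2]expr2.
  exact: le_lt_trans (uv K) (le_lt_trans (ler_norm _) vK).
by rewrite ltr_sqr ?nnegrE ?normr_ge0 ?ltW.
Qed.

Lemma connect_forward_closed {T : finType} {e : rel T} {A : pred T} :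
  (forall x y, A x -> e x y -> A y) ->
  forall x y, connect e x y -> A x -> A y.
Proof.
move=> A_closed x y /connectP [s es ->] {y}.
by elim: s x es => //= z s IHs x /andP [exz es] Ax; apply: IHs es (A_closed _ _ Ax exz).
Qed.

Lemma cdeg_gt0_connect {R : realType} {N : nat} (w : 'I_N -> 'I_N -> R) x y :
  (forall x y, 0 <= w x y) -> x != y -> connect [rel x y | 0 < w x y] x y -> 0 < cdeg w x.
Proof.
move=> w_ge0 xy /connectP [[|z s] /=]; first by move=> _ yx; rewrite yx eqxx in xy.
move=> /andP [wxz _] _; apply: lt_le_trans wxz _.
by rewrite /cdeg (bigD1 z) //= lerDl sumr_ge0.
Qed.

Section KilledWalk.
Context {R : realType} {N d : nat}.
Variables (w : 'I_N -> 'I_N -> R) (sigma : 'I_N -> 'I_N -> 'M[R]_d) (j : 'I_N).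
Hypotheses (w_ge0 : forall x y, 0 <= w x y) (cdeg_gt0 : forall x, 0 < cdeg w x).

Local Notation p := (trans w).

Lemma trans_ge0 x y : 0 <= p x y.
Proof. exact: divr_ge0 (w_ge0 x y) (ltW (cdeg_gt0 x)). Qed.

Lemma trans_gt0 x y : (0 < p x y) = (0 < w x y).
Proof. by rewrite /trans pmulr_lgt0 // invr_gt0. Qed.

Lemma cdeg_trans x y : cdeg w x * p x y = w x y.
Proof. by rewrite /trans mulrC divfK // gt_eqF. Qed.

Lemma sum_trans_neq x : \sum_(y | y != j) p x y = 1 - p x j.
Proof.
have sum_trans : \sum_y p x y = 1 by rewrite /trans -mulr_suml -/(cdeg w x) divff // gt_eqF.
by rewrite -sum_trans [in RHS](bigD1 j) //= addrC addrK.
Qed.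

Lemma sum_trans_neq_le1 x : \sum_(y | y != j) p x y <= 1.
Proof. by rewrite sum_trans_neq lerBlDr lerDl trans_ge0. Qed.

Fixpoint avoid_prob (K : nat) (x : 'I_N) : R :=
  if K is K'.+1 then \sum_(y | y != j) p x y * avoid_prob K' y else 1.

Lemma avoid_prob_ge0 K x : 0 <= avoid_prob K x.
Proof.
elim: K x => [|K IHK] x /=; first exact: ler01.
by apply: sumr_ge0 => y _; rewrite mulr_ge0 ?trans_ge0.
Qed.

Lemma avoid_probS_le K x : avoid_prob K.+1 x <= avoid_prob K x.
Proof.
elim: K x => [|K IHK] x /=.
  by under eq_bigr do rewrite mulr1; apply: sum_trans_neq_le1.
by apply: ler_sum => y _; rewrite ler_wpM2l ?trans_ge0 ?IHK.
Qed.

Definition avoid_prob_lim x := inf (range (avoid_prob ^~ x)).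

Lemma avoid_prob_cvg x : avoid_prob ^~ x @ \oo --> avoid_prob_lim x.
Proof.
apply: nonincreasing_cvgn; first by apply/nonincreasing_seqP => K; apply: avoid_probS_le.
by exists 0 => _ [K _ <-]; apply: avoid_prob_ge0.
Qed.

Lemma avoid_prob_lim_ge0 x : 0 <= avoid_prob_lim x.
Proof.
apply: lb_le_inf; first by exists (avoid_prob 0 x), 0%N.
by move=> _ [K _ <-]; apply: avoid_prob_ge0.
Qed.

Lemma avoid_prob_lim_harmonic x :
  avoid_prob_lim x = \sum_(y | y != j) p x y * avoid_prob_lim y.
Proof.
have lim_shift := avoid_prob_cvg x; rewrite -cvg_shiftS /= in lim_shift.
apply: (cvg_unique _ lim_shift) => //; apply: cvg_big => [|y _].
  exact: add_continuous.
exact: cvgMl_tmp (avoid_prob_cvg y).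
Qed.

Hypothesis connected_to_j : forall x, connect [rel x y | 0 < w x y] x j.

(* If the maximum of f off j were positive, the set where it is attained
   would be closed under edges (harmonicity forces p z j = 0 and f y = max
   at every neighbour y of such a z), hence would contain j. *)
Lemma killed_harmonic_le0 (f : 'I_N -> R) :
  (forall x, x != j -> f x = \sum_(y | y != j) p x y * f y) ->
  forall x, x != j -> f x <= 0.
Proof.
move=> f_harm x xj.
have [x0 x0j f_max] := @arg_maxP _ _ _ x [pred z | z != j] f xj.
apply: le_trans (f_max _ xj) _; rewrite leNgt; apply/negP => fx0_gt0.
pose A z := (z != j) && (f z == f x0).
have A_closed z y : A z -> 0 < w z y -> A y.
  move=> /andP [zj /eqP fz] wzy.
  have gap_ge0 y' : y' != j -> 0 <= p z y' * (f x0 - f y').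
    by move=> y'j; rewrite mulr_ge0 ?trans_ge0 // subr_ge0; apply: f_max.
  have gap_sum : \sum_(y' | y' != j) p z y' * (f x0 - f y') = - (f x0 * p z j).
    under eq_bigr do rewrite mulrBr mulrC.
    by rewrite sumrB -mulr_sumr sum_trans_neq -f_harm // fz; ring.
  have pzj0 : p z j = 0.
    apply/le_anti; rewrite trans_ge0 andbT -(pmulr_rle0 _ fx0_gt0) -oppr_ge0 -gap_sum.
    exact: sumr_ge0.
  have yj : y != j by apply: contraTneq wzy => ->; rewrite -trans_gt0 pzj0 ltxx.
  have gap0 : \sum_(y' | y' != j) p z y' * (f x0 - f y') = 0.
    by rewrite gap_sum pzj0 mulr0 oppr0.
  move: (psumr_eq0P gap_ge0 gap0 yj) => /eqP; rewrite -trans_gt0 in wzy.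
  by rewrite mulf_eq0 gt_eqF //= subr_eq0 /A yj eq_sym.
have /negP [] : ~~ A j by rewrite /A eqxx.
by apply: (connect_forward_closed A_closed _ _ (connected_to_j x0)); rewrite /A eqxx andbT.
Qed.

Lemma avoid_prob_cvg0 x : x != j -> avoid_prob ^~ x @ \oo --> 0.
Proof.
move=> xj; suff <- : avoid_prob_lim x = 0 by apply: avoid_prob_cvg.
apply/le_anti; rewrite avoid_prob_lim_ge0 andbT.
by apply: killed_harmonic_le0 => // y _; apply: avoid_prob_lim_harmonic.
Qed.

Definition killed_step {m} (f : 'I_N -> 'M[R]_(d, m)) (x : 'I_N) : 'M[R]_(d, m) :=
  \sum_(y | y != j) p x y *: (sigma x y *m f y).

Hypothesis sigma_orth : forall x y, 0 < w x y -> (sigma x y)^T *m sigma x y = 1%:M.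

Lemma frob2_killed_step_le {m} (f : 'I_N -> 'M[R]_(d, m)) x :
  frob2 (killed_step f x) <= \sum_(y | y != j) p x y * frob2 (f y).
Proof.
apply: le_trans (frob2_wsum_le (p x) _ (fun y _ => trans_ge0 x y)) _.
apply: le_trans (ler_piMl _ (sum_trans_neq_le1 x)) _.
  by apply: sumr_ge0 => y _; rewrite mulr_ge0 ?trans_ge0 ?frob2_ge0.
apply: ler_sum => y _; have [wxy_gt0|wxy_le0] := ltrP 0 (w x y).
  by rewrite frob2_orthomx ?sigma_orth.
suff -> : p x y = 0 by rewrite !mul0r.
by apply/le_anti; rewrite trans_ge0 andbT leNgt trans_gt0 -leNgt.
Qed.

Section KilledIteration.
Variables (m : nat) (g : nat -> 'I_N -> 'M[R]_(d, m)).
Hypothesis g_rec : forall K x, x != j -> g K.+1 x = killed_step (g K) x.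

Lemma frob2_killed_iter_le K x : x != j ->
  frob2 (g K x) <= (\sum_y frob2 (g 0%N y)) * avoid_prob K x.
Proof.
elim: K x => [|K IHK] x xj.
  by rewrite mulr1 (bigD1 x) //= lerDl sumr_ge0 // => y _; apply: frob2_ge0.
rewrite g_rec //; apply: le_trans (frob2_killed_step_le (g K) x) _.
rewrite /= mulr_sumr; apply: ler_sum => y yj.
by rewrite mulrCA ler_wpM2l ?trans_ge0 ?IHK.
Qed.

Lemma killed_iter_cvg0 x a b : x != j -> (fun K => g K x a b) @ \oo --> 0.
Proof.
move=> xj; pose C := \sum_y frob2 (g 0%N y).
apply: (@cvg0_sqr_le _ _ (fun K => C * avoid_prob K x)).
  by move=> K; apply: le_trans (sqr_mxE_le_frob2 _ a b) (frob2_killed_iter_le K x xj).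
by rewrite -(mulr0 C); apply: cvgMl_tmp; apply: avoid_prob_cvg0.
Qed.

End KilledIteration.

Lemma killed_fixpoint_eq0 {m} (f : 'I_N -> 'M[R]_(d, m)) :
  (forall x, x != j -> f x = killed_step f x) -> forall x, x != j -> f x = 0.
Proof.
move=> f_fix x xj; apply/matrixP => a b; rewrite mxE.
have := killed_iter_cvg0 m (fun _ => f) (fun _ => f_fix) x a b xj.
exact: cvg_unique (cvg_cst (f x a b)).
Qed.

End KilledWalk.

Lemma sum_tuple_cons {I : finType} {V : nmodType} {T : nat} (F : T.+1.-tuple I -> V) :
  \sum_(t : T.+1.-tuple I) F t = \sum_(y : I) \sum_(t : T.-tuple I) F [tuple of y :: t].
Proof.
rewrite (reindex (fun yt : I * T.-tuple I => [tuple of yt.1 :: yt.2])) /=.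
  by rewrite pair_big; apply: eq_bigr => -[y t] _.
exists (fun t : T.+1.-tuple I => (thead t, [tuple of behead t])) => [[y t] _ | t _].
  by congr pair; apply: val_inj.
by rewrite -tuple_eta.
Qed.

Section HittingSeries.
Context {R : realType} {N d : nat}.
Variables (w : 'I_N -> 'I_N -> R) (sigma : 'I_N -> 'I_N -> 'M[R]_d) (j : 'I_N).

Local Notation omega T x := (omega_term w sigma x j T).

Lemma omega_term0 x : x != j -> omega 0%N x = 0.
Proof. by move=> xj; rewrite /omega_term (negbTE xj) mulr0n raddf0. Qed.

Lemma omega_term1 x : x != j -> omega 1%N x = trans w x j *: sigma x j.
Proof.
move=> xj; rewrite /omega_term xj (big_pred1 [tuple]) /= ?mulmx1 // => t.
by rewrite (tuple0 t).
Qed.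

Lemma omega_termSS x T : x != j ->
  omega T.+2 x = killed_step w sigma j (fun y => omega T.+1 y) x.
Proof.
move=> xj; rewrite /killed_step [LHS]/omega_term big_mkcond sum_tuple_cons [RHS]big_mkcond.
apply: eq_bigr => y _; case: (eqVneq y j) => [->|yj].
  by rewrite big1 // => t; rewrite /= eqxx andbF.
rewrite /= /omega_term mulmx_sumr scaler_sumr [RHS]big_mkcond.
by apply: eq_bigr => t _; rewrite xj yj.
Qed.

Definition omega_psum (K : nat) (x : 'I_N) : 'M[R]_d := \sum_(T < K) omega T x.

Lemma omega_psumS K x : omega_psum K.+1 x = omega_psum K x + omega K x.
Proof. exact: big_ord_recr. Qed.

Lemma omega_psumSS K x : x != j ->
  omega_psum K.+2 x =
    trans w x j *: sigma x j + killed_step w sigma j (omega_psum K.+1) x.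
Proof.
move=> xj; rewrite /omega_psum !big_ord_recl omega_term0 // add0r omega_term1 //.
congr (_ + _); rewrite /killed_step.
under [RHS]eq_bigr => y yj do
  rewrite big_ord_recl omega_term0 // add0r mulmx_sumr scaler_sumr.
by rewrite exchange_big; apply: eq_bigr => T _; rewrite omega_termSS.
Qed.

End HittingSeries.

Lemma dec_enc {N d : nat} (q : 'I_N * 'I_d) : dec (enc q) = q.
Proof. by rewrite /dec /enc /mxvec_index cast_ordK enum_rankK -surjective_pairing. Qed.

Lemma enc_dec {N d : nat} (k : 'I_(N * d)) : enc (dec k) = k.
Proof. by rewrite /dec /enc /mxvec_index -surjective_pairing enum_valK cast_ordKV. Qed.

Lemma sum_enc {V : nmodType} {N d : nat} (F : 'I_(N * d) -> V) :
  \sum_k F k = \sum_(u < N) \sum_(c < d) F (enc (u, c)).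
Proof.
rewrite (reindex (@enc N d)) /=; last by exists (@dec N d) => q _; rewrite ?dec_enc ?enc_dec.
by rewrite pair_big; apply: eq_bigr => -[u c] _.
Qed.

Lemma sum_neq_lift {V : nmodType} {n : nat} (j : 'I_n.+1) (G : 'I_n.+1 -> V) :
  \sum_(y | y != j) G y = \sum_(u < n) G (lift j u).
Proof.
rewrite (reindex_omap (lift j) (unlift j)) => [|y].
  by apply: eq_bigl => u; rewrite liftK eqxx eq_sym neq_lift.
by case: unliftP => [u ->|->]; rewrite ?eqxx.
Qed.

Section Stacking.
Context {R : nmodType} {n d : nat}.
Variable j : 'I_n.+1.

Definition stack {m} (f : 'I_n.+1 -> 'M[R]_(d, m)) : 'M[R]_(n * d, m) :=
  \matrix_(k, b) f (lift j (dec k).1) (dec k).2 b.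

Definition unstack {m} (X : 'M[R]_(n * d, m)) (x : 'I_n.+1) : 'M[R]_(d, m) :=
  if unlift j x is Some u then \matrix_(a, b) X (enc (u, a)) b else 0.

Lemma stackE {m} (f : 'I_n.+1 -> 'M[R]_(d, m)) u a b :
  stack f (enc (u, a)) b = f (lift j u) a b.
Proof. by rewrite mxE dec_enc. Qed.

Lemma unstack_lift {m} (X : 'M[R]_(n * d, m)) u a b :
  unstack X (lift j u) a b = X (enc (u, a)) b.
Proof. by rewrite /unstack liftK mxE. Qed.

Lemma unstackK {m} (X : 'M[R]_(n * d, m)) : stack (unstack X) = X.
Proof. by apply/matrixP => k b; rewrite mxE unstack_lift -surjective_pairing enc_dec. Qed.

Lemma stackK {m} (f : 'I_n.+1 -> 'M[R]_(d, m)) x : x != j -> unstack (stack f) x = f x.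
Proof.
rewrite eq_sym => /unlift_some [u -> _].
by apply/matrixP => a b; rewrite unstack_lift stackE.
Qed.

Lemma eq_stack {m} (f g : 'I_n.+1 -> 'M[R]_(d, m)) :
  (forall x, x != j -> f x = g x) -> stack f = stack g.
Proof. by move=> fg; apply/matrixP => k b; rewrite !mxE fg // eq_sym neq_lift. Qed.

Lemma stackD {m} (f g : 'I_n.+1 -> 'M[R]_(d, m)) :
  stack (fun x => f x + g x) = stack f + stack g.
Proof. by apply/matrixP => k b; rewrite !mxE. Qed.

Lemma stack_eq0 {m} (f : 'I_n.+1 -> 'M[R]_(d, m)) :
  stack f = 0 <-> forall x, x != j -> f x = 0.
Proof.
split=> [f0 x xj | f0]; last by apply/matrixP => k b; rewrite !mxE f0 ?mxE // eq_sym neq_lift.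
rewrite -(stackK f x xj) f0 /unstack; case: unlift => // u.
by apply/matrixP => a b; rewrite !mxE.
Qed.

End Stacking.

Lemma block_atE {R : realType} {n d : nat} (j : 'I_n.+1) (X : 'M[R]_(n * d, d)) :
  block_at j X = unstack j X.
Proof. by []. Qed.

Section ConnectionLaplacian.
Context {R : realType} {n d : nat}.
Variables (w : 'I_n.+1 -> 'I_n.+1 -> R) (sigma : 'I_n.+1 -> 'I_n.+1 -> 'M[R]_d).
Variable j : 'I_n.+1.
Hypotheses (w_ge0 : forall x y, 0 <= w x y) (w_noloop : forall x, w x x = 0).
Hypothesis cdeg_gt0 : forall x, 0 < cdeg w x.

Local Notation L := (conn_lap w sigma).

Lemma conn_lapE x y a b : L (enc (x, a)) (enc (y, b)) = lap_block w sigma x y a b.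
Proof. by rewrite mxE !dec_enc. Qed.

Lemma lap_blockE x y :
  lap_block w sigma x y = (x == y)%:R *: (cdeg w x)%:M - w x y *: sigma x y.
Proof.
rewrite /lap_block; case: eqVneq => [->|_]; first by rewrite w_noloop scale0r subr0 scale1r.
rewrite scale0r add0r; case: ltrP => // w_le0.
have -> : w x y = 0 by apply/le_anti; rewrite w_le0 w_ge0.
by rewrite scale0r oppr0.
Qed.

Lemma lap_jc_mul_stack {m} (f : 'I_n.+1 -> 'M[R]_(d, m)) :
  lap_jc L j *m stack j f =
    stack j (fun x => cdeg w x *: (f x - killed_step w sigma j f x)).
Proof.
apply/matrixP => k b; rewrite -[k]enc_dec; case: (dec k) => u a.
set x := lift j u; have xj : x != j by rewrite eq_sym neq_lift.
have row_x : \sum_(y | y != j) lap_block w sigma x y *m f y =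
    cdeg w x *: f x - \sum_(y | y != j) w x y *: (sigma x y *m f y).
  under eq_bigr do rewrite lap_blockE mulmxBl -!scalemxAl.
  rewrite sumrB (bigD1 x) //= eqxx scale1r mul_scalar_mx big1 ?addr0 // => y /andP [_ yx].
  by rewrite eq_sym (negbTE yx) scale0r.
rewrite stackE scalerBr /killed_step scaler_sumr.
under eq_bigr do rewrite scalerA (cdeg_trans w cdeg_gt0).
rewrite -row_x mxE sum_enc sum_neq_lift summxE; apply: eq_bigr => v _; rewrite mxE.
by apply: eq_bigr => c _; rewrite stackE mxE !dec_enc conn_lapE.
Qed.

Lemma lap_jc_j_stack :
  lap_jc_j L j = stack j (fun x => - (cdeg w x *: (trans w x j *: sigma x j))).
Proof.
apply/matrixP => k b; rewrite -[k]enc_dec; case: (dec k) => u a.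
rewrite stackE mxE dec_enc conn_lapE lap_blockE eq_sym (negbTE (neq_lift j u)).
by rewrite scale0r add0r scalerA (cdeg_trans w cdeg_gt0).
Qed.

End ConnectionLaplacian.

Section HittingMatrix.
Context {R : realType} {n d : nat}.
Variables (w : 'I_n.+1 -> 'I_n.+1 -> R) (sigma : 'I_n.+1 -> 'I_n.+1 -> 'M[R]_d).
Variable j : 'I_n.+1.
Hypotheses (w_ge0 : forall x y, 0 <= w x y) (w_noloop : forall x, w x x = 0).
Hypotheses (cdeg_gt0 : forall x, 0 < cdeg w x)
  (connected_to_j : forall x, connect [rel x y | 0 < w x y] x j)
  (sigma_orth : forall x y, 0 < w x y -> (sigma x y)^T *m sigma x y = 1%:M).

Local Notation Ljc := (lap_jc (conn_lap w sigma) j).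
Local Notation Ljcj := (lap_jc_j (conn_lap w sigma) j).
Lemma omega_term_cvg0 x a b : x != j ->
  (fun K => omega_term w sigma x j K a b) @ \oo --> 0.
Proof.
move=> xj; rewrite -cvg_shiftS.
apply: (killed_iter_cvg0 w sigma j w_ge0 cdeg_gt0 connected_to_j sigma_orth _
          (fun K y => omega_term w sigma y j K.+1)) => // K y yj.
exact: omega_termSS.
Qed.

Lemma lap_jc_unit : Ljc \in unitmx.
Proof.
rewrite -unitmx_tr -row_free_unit; apply: inj_row_free => v vLjc0.
have : Ljc *m stack j (unstack j v^T) = 0.
  by rewrite unstackK -[Ljc]trmxK -trmx_mul vLjc0 trmx0.
rewrite lap_jc_mul_stack // => /stack_eq0 resid0.
apply: trmx_inj; rewrite trmx0 -(unstackK j v^T); apply/stack_eq0.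
apply: (killed_fixpoint_eq0 w sigma j w_ge0 cdeg_gt0 connected_to_j sigma_orth).
move=> x xj; apply/eqP; rewrite -subr_eq0.
by have /eqP := resid0 x xj; rewrite scaler_eq0 gt_eqF.
Qed.

Local Notation residual K := (stack j (fun x => - (cdeg w x *: omega_term w sigma x j K.+1))).

Lemma lap_jc_psum_residual K :
  Ljc *m stack j (omega_psum w sigma j K.+1) + Ljcj = residual K.
Proof.
rewrite lap_jc_mul_stack // lap_jc_j_stack // -stackD; apply: eq_stack => x xj.
have -> : killed_step w sigma j (omega_psum w sigma j K.+1) x =
    omega_psum w sigma j K.+1 x + (omega_term w sigma x j K.+1 - trans w x j *: sigma x j).
  by rewrite addrA -omega_psumS omega_psumSS // addrC addKr.
by rewrite opprD addNKr opprB scalerBr addrAC subrr add0r.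
Qed.

Lemma residual_cvg0 k c : (fun K => residual K k c) @ \oo --> 0.
Proof.
rewrite -[k]enc_dec; case: (dec k) => u a; under eq_fun do rewrite stackE !mxE.
rewrite -oppr0 -(mulr0 (cdeg w (lift j u))); apply: cvgN; apply: cvgMl_tmp.
have := omega_term_cvg0 (lift j u) a c; rewrite -cvg_shiftS; apply.
by rewrite eq_sym neq_lift.
Qed.

Lemma stack_psum_cvg k c :
  (fun K => stack j (omega_psum w sigma j K.+1) k c) @ \oo --> (invmx Ljc *m - Ljcj) k c.
Proof.
have psumE K : stack j (omega_psum w sigma j K.+1) = invmx Ljc *m (residual K - Ljcj).
  by rewrite -lap_jc_psum_residual addrK mulKmx // lap_jc_unit.
under eq_fun do rewrite psumE; apply: cvg_mulmx_entry => {}k {}c.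
have -> : (fun K => (residual K - Ljcj) k c) = (fun K => residual K k c - Ljcj k c).
  by apply/funext => K; rewrite [(residual K - Ljcj) k c]mxE [(- Ljcj) k c]mxE.
suff : (fun K => residual K k c - Ljcj k c) @ \oo --> 0 - Ljcj k c.
  by rewrite sub0r [(- Ljcj) k c]mxE.
exact: cvgB (residual_cvg0 k c) (cvg_cst _).
Qed.

Lemma omega_series_cvg x a b : x != j ->
  (fun K => \sum_(T < K) omega_term w sigma x j T a b) @ \oo -->
    (- unstack j (invmx Ljc *m Ljcj) x) a b.
Proof.
rewrite eq_sym => /unlift_some [u -> _].
have -> : (- unstack j (invmx Ljc *m Ljcj) (lift j u)) a b =
    (invmx Ljc *m - Ljcj) (enc (u, a)) b.
  by rewrite mulmxN !mxE unstack_lift !mxE.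
rewrite -cvg_shiftS /=.
under eq_fun do rewrite -summxE -/(omega_psum w sigma j _ (lift j u)) -stackE.
exact: stack_psum_cvg.
Qed.

End HittingMatrix.

Theorem proposition4p9 (R : realType) (n d : nat)
  (w : 'I_n.+1 -> 'I_n.+1 -> R) (sigma : 'I_n.+1 -> 'I_n.+1 -> 'M[R]_d)
  (w_ge0 : forall i k, 0 <= w i k)
  (w_sym : forall i k, w i k = w k i)
  (w_noloop : forall i, w i i = 0)
  (G_connected : forall i k, connect [rel x y | 0 < w x y] i k)
  (sigma_orth : forall i k, 0 < w i k -> sigma i k *m (sigma i k)^T = 1%:M)
  (sigma_sym : forall i k, 0 < w i k -> sigma k i = (sigma i k)^T)
  (i j : 'I_n.+1) (hij : i != j) :
  let L := conn_lap w sigma in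
  let X := - block_at j (invmx (lap_jc L j) *m lap_jc_j L j) i in
  forall a b : 'I_d,
    (fun K : nat => \sum_(T < K) omega_term w sigma i j T a b) @ \oo --> X a b.
Proof.
move=> L X a b.
have cdeg_gt0 x : 0 < cdeg w x.
  have [-> | xj] := eqVneq x j; last exact: cdeg_gt0_connect w_ge0 xj (G_connected x j).
  by apply: cdeg_gt0_connect w_ge0 _ (G_connected j i); rewrite eq_sym.
have sigma_orthT x y : 0 < w x y -> (sigma x y)^T *m sigma x y = 1%:M.
  by move=> wxy; apply: mulmx1C; apply: sigma_orth.
rewrite /X block_atE.
exact: omega_series_cvg w_ge0 w_noloop cdeg_gt0 (G_connected^~ j) sigma_orthT i a b hij.
Qed.
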